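(* Let $b>1$ be an integer and let $\mu,\sigma$ be the digit mean and digit standard deviation of some generalized $b$-happy function $H$. Let $n$ be a positive integer satisfying bound (B): (B1) $4\left(1+3\mu+\sqrt{2}\,\sigma\, b^{5n/8}\right)\le b^{n-1}$, (B2) $\sqrt{3\mu b}\,\sigma\le b^{3n/8}$, (B3) $4\mu\left(3\mu+1+b^{3n/4}+2\sigma\mu^{-1/2}b^{5n/8}\right)\le b^{n-1}$. Let $\lambda=b^{n/8}$, let $a\in[b^{n-1},b^n]$, and define $f(x)=1+\frac34\mu x+\lambda\sigma\sqrt{\frac34 x}$ for $x\ge0$. Then there exists an integer $n_2$ such that - $\frac{b^{n-1}}{\mu}\le n_2\le\frac{4}{3\mu}b^n$, - $4\mid n_2$, - $0\le a-f(n_2)\le 3\mu+1$.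
   Context: A generalized $b$-happy function: fix an integer $b>1$ and non-negative integers $h(0),\dots,h(b-1)$ with $h(0)=0$, $h(1)=1$; for $n=\sum_{i=0}^k a_ib^i$ in base $b$, $H(n)=\sum_{i=0}^k h(a_i)$. Its digit mean is $\mu=\frac1b\sum_{j=0}^{b-1}h(j)$ and its digit variance is $\sigma^2=\frac1b\sum_{j=0}^{b-1}(h(j)-\mu)^2$, with $\sigma\ge0$. *)

From Stdlib Require Import Reals Lra Lia ZArith.
Open Scope R_scope.

(* A generalized b-happy function is determined by digit values
   h(0..b-1) : nat with h 0 = 0, h 1 = 1 (values of h at j >= b are irrelevant). *)
Definition happy_digits (b : nat) (h : nat -> nat) : Prop :=
  (1 < b)%nat /\ h 0%nat = 0%nat /\ h 1%nat = 1%nat.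

Fixpoint happyH_aux (fuel : nat) (b : nat) (h : nat -> nat) (n : nat) : nat :=
  match fuel with
  | O => O
  | S k => match n with
           | O => O
           | _ => (h (n mod b) + happyH_aux k b h (n / b))%nat
           end
  end.
Definition happyH (b : nat) (h : nat -> nat) (n : nat) : nat := happyH_aux (S n) b h n.

Definition digit_mean (b : nat) (h : nat -> nat) : R :=
  (/ INR b) * sum_f_R0 (fun j => INR (h j)) (b - 1).

Definition digit_var (b : nat) (h : nat -> nat) : R :=
  (/ INR b) * sum_f_R0 (fun j => (INR (h j) - digit_mean b h) ^ 2) (b - 1).

Definition digit_sd (b : nat) (h : nat -> nat) : R := sqrt (digit_var b h).

From Stdlib Require Import Reals ZArith Lra Lia.
Open Scope R_scope.

(* Put t = λσ.  Along the multiples x of 4, f(x + 4) - f(x) = 3μ + t(√(3(x+4)/4) - √(3x/4)),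
   and as soon as 3t² <= x the square-root increment is at most 1/t, so each step raises f
   by at most 3μ + 1.  Start at the first multiple of 4 above b^(n-1)/μ: (B1) makes f there at
   most b^(n-1) <= a, and (B2) gives 3t² <= b^(n-1)/μ.  Since f is unbounded, the last point of
   the progression where f <= a lies within 3μ + 1 below a, and f(x) >= 3μx/4 bounds it by
   4b^n/(3μ). *)

Lemma sum_f_R0_ge_term (g : nat -> R) (i m : nat) :
  (forall j, 0 <= g j) -> (i <= m)%nat -> g i <= sum_f_R0 g m.
Proof.
  intros Hg Him; induction m as [|m IH].
  - replace i with 0%nat by lia; simpl; lra.
  - rewrite tech5; pose proof (Hg (S m)); pose proof (cond_pos_sum g m Hg).
    destruct (Nat.eq_dec i (S m)) as [->|Hne]; [lra|].
    specialize (IH ltac:(lia)); lra.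
Qed.

Lemma digit_mean_mul_base_ge_1 (b : nat) (h : nat -> nat) :
  happy_digits b h -> 1 <= digit_mean b h * INR b.
Proof.
  intros [Hb [_ H1]].
  assert (Hb0 : 0 < INR b) by (apply lt_0_INR; lia).
  pose proof (sum_f_R0_ge_term (fun j => INR (h j)) 1 (b - 1)
                (fun j => pos_INR _) ltac:(lia)) as Hsum.
  cbv beta in Hsum; rewrite H1 in Hsum; simpl in Hsum.
  unfold digit_mean.
  replace (/ INR b * sum_f_R0 (fun j => INR (h j)) (b - 1) * INR b)
    with (sum_f_R0 (fun j => INR (h j)) (b - 1)) by (field; lra).
  exact Hsum.
Qed.

Lemma Rpower_mult_INR (x y : R) (k : nat) :
  0 < x -> Rpower x (INR k * y) = Rpower x y ^ k.
Proof.
  intros Hx.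
  rewrite <- Rpower_pow by (unfold Rpower; apply exp_pos).
  rewrite Rpower_mult; f_equal; ring.
Qed.

Lemma sqrt_increment_le (y d : R) :
  0 <= y -> 0 <= d -> 2 * sqrt y * (sqrt (y + d) - sqrt y) <= d.
Proof.
  intros Hy Hd.
  pose proof (sqrt_sqrt y Hy); pose proof (sqrt_sqrt (y + d) ltac:(lra)).
  pose proof (sqrt_pos y); pose proof (sqrt_le_1_alt y (y + d) ltac:(lra)).
  (* d - 2√y(√(y+d) - √y) = (√(y+d) - √y)² *)
  nra.
Qed.

Lemma exists_mult4_between (r : R) : exists z : Z, r <= 4 * IZR z <= r + 4.
Proof. destruct (archimed (r / 4)) as [Hlo Hhi]; exists (up (r / 4)); lra. Qed.

Lemma exists_crossing (g : nat -> R) (a D : R) :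
  g 0%nat <= a -> (forall k, g (S k) <= g k + D) -> (exists M, a < g M) ->
  exists k, 0 <= a - g k <= D.
Proof.
  intros H0 Hstep [M HM]; induction M as [|M IH]; [lra|].
  destruct (Rle_dec (g M) a) as [HgM|HgM].
  - exists M; specialize (Hstep M); lra.
  - apply IH; lra.
Qed.

Section HappyBound.

Variables mu t : R.
Hypotheses (Hmu : 0 < mu) (Ht : 0 <= t).

Definition happy_bound (x : R) : R := 1 + 3 / 4 * mu * x + t * sqrt (3 / 4 * x).

Lemma happy_bound_ge (x : R) : 1 + 3 / 4 * mu * x <= happy_bound x.
Proof. unfold happy_bound; pose proof (sqrt_pos (3 / 4 * x)); nra. Qed.

Lemma happy_bound_step (x : R) :
  3 * t ^ 2 <= x -> happy_bound (x + 4) <= happy_bound x + (3 * mu + 1).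
Proof.
  intros Hx; unfold happy_bound.
  replace (3 / 4 * (x + 4)) with (3 / 4 * x + 3) by lra.
  set (y := 3 / 4 * x).
  assert (Hy : 0 <= y) by (unfold y; nra).
  pose proof (sqrt_increment_le y 3 Hy ltac:(lra)) as Hinc.
  pose proof (sqrt_sqrt y Hy); pose proof (sqrt_pos y).
  pose proof (sqrt_le_1_alt y (y + 3) ltac:(lra)).
  assert (Hts : 3 * t <= 2 * sqrt y) by (unfold y in *; nra).
  nra.
Qed.

Lemma happy_bound_crossing (a : R) (z0 : Z) :
  3 * t ^ 2 <= 4 * IZR z0 -> happy_bound (4 * IZR z0) <= a ->
  exists z : Z, (z0 <= z)%Z /\ 0 <= a - happy_bound (4 * IZR z) <= 3 * mu + 1.
Proof.
  intros Hz0 Hstart.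
  assert (Hz0pos : 0 <= IZR z0) by nra.
  set (g := fun k : nat => happy_bound (4 * IZR (z0 + Z.of_nat k))).
  destruct (exists_crossing g a (3 * mu + 1)) as [k Hk].
  - unfold g; rewrite Z.add_0_r; exact Hstart.
  - intros k; unfold g.
    rewrite Nat2Z.inj_succ, Z.add_succ_r, succ_IZR.
    replace (4 * (IZR (z0 + Z.of_nat k) + 1)) with (4 * IZR (z0 + Z.of_nat k) + 4) by ring.
    apply happy_bound_step.
    rewrite plus_IZR, <- INR_IZR_INZ; pose proof (pos_INR k); lra.
  - destruct (INR_unbounded (a / (3 * mu))) as [M HM]; exists M.
    unfold g; rewrite plus_IZR, <- INR_IZR_INZ.
    eapply Rlt_le_trans; [|apply happy_bound_ge].
    replace a with (3 * mu * (a / (3 * mu))) at 1 by (field; lra).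
    nra.
  - exists (z0 + Z.of_nat k)%Z; split; [lia|exact Hk].
Qed.

End HappyBound.

Lemma scaled_sd_sq_le (mu sigma B lam P : R) :
  0 < mu -> 0 <= sigma -> 0 < B -> 0 < lam -> lam ^ 8 = B * P ->
  sqrt (3 * mu * B) * sigma <= lam ^ 3 -> 3 * (lam * sigma) ^ 2 <= P / mu.
Proof.
  intros Hmu Hsig HB Hlam H8 HB2.
  assert (Hsq : 3 * mu * B * sigma ^ 2 <= lam ^ 6).
  { pose proof (sqrt_pos (3 * mu * B)).
    replace (3 * mu * B * sigma ^ 2) with ((sqrt (3 * mu * B) * sigma) ^ 2)
      by (rewrite Rpow_mult_distr, pow2_sqrt by nra; ring).
    replace (lam ^ 6) with ((lam ^ 3) ^ 2) by ring.
    apply pow_incr; split; [nra|exact HB2]. }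
  assert (Hkey : mu * (3 * (lam * sigma) ^ 2) <= P).
  { apply (Rmult_le_reg_l B); [exact HB|].
    rewrite <- H8; pose proof (pow_lt lam 2 Hlam); nra. }
  apply (Rmult_le_reg_l mu); [exact Hmu|].
  replace (mu * (P / mu)) with P by (field; lra); exact Hkey.
Qed.

Lemma happy_bound_start (mu sigma B lam P x : R) :
  1 <= mu * B -> 2 <= B -> 0 <= sigma -> 0 < lam -> lam ^ 8 = B * P ->
  4 * (1 + 3 * mu + sqrt 2 * sigma * lam ^ 5) <= P ->
  0 <= x -> x <= P / mu + 4 -> happy_bound mu (lam * sigma) x <= P.
Proof.
  intros Hmu HB Hsig Hlam H8 HB1 Hx0 Hx.
  assert (Hmu0 : 0 < mu) by nra.
  assert (Hlam5 : 0 <= sqrt 2 * sigma * lam ^ 5).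
  { pose proof (sqrt_pos 2); pose proof (pow_lt lam 5 Hlam).
    apply Rmult_le_pos; [apply Rmult_le_pos|]; lra. }
  assert (HP : 4 <= P) by nra.
  assert (Hmux : mu * x <= P + 4 * mu).
  { replace (P + 4 * mu) with (mu * (P / mu + 4)) by (field; lra); nra. }
  assert (HxBP : x <= B * P + 4).
  { enough (P / mu <= B * P) by lra.
    apply (Rmult_le_reg_l mu); [exact Hmu0|].
    replace (mu * (P / mu)) with P by (field; lra); nra. }
  assert (Hsqrt : sqrt (3 / 4 * x) <= sqrt 2 * lam ^ 4).
  { rewrite <- (sqrt_pow2 (lam ^ 4)) by (pose proof (pow_lt lam 4 Hlam); lra).
    rewrite <- sqrt_mult by (try apply pow2_ge_0; lra).
    apply sqrt_le_1_alt.
    replace (2 * (lam ^ 4) ^ 2) with (2 * (B * P)) by (rewrite <- H8; ring).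
    nra. }
  unfold happy_bound.
  assert (lam * sigma * sqrt (3 / 4 * x) <= sqrt 2 * sigma * lam ^ 5).
  { replace (sqrt 2 * sigma * lam ^ 5) with (lam * sigma * (sqrt 2 * lam ^ 4)) by ring.
    apply Rmult_le_compat_l; [nra|exact Hsqrt]. }
  nra.
Qed.

Theorem lemma6p2 (b : nat) (h : nat -> nat) (n : nat) (a : R) :
  happy_digits b h ->
  (0 < n)%nat ->
  let mu := digit_mean b h in
  let sigma := digit_sd b h in
  let B := INR b in
  (* (B1) *)
  4 * (1 + 3 * mu + sqrt 2 * sigma * Rpower B (5 * INR n / 8)) <= B ^ (n - 1) ->
  (* (B2) *)
  sqrt (3 * mu * B) * sigma <= Rpower B (3 * INR n / 8) ->
  (* (B3) *)
  4 * mu * (3 * mu + 1 + Rpower B (3 * INR n / 4)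
            + 2 * sigma * Rpower mu (- (1 / 2)) * Rpower B (5 * INR n / 8))
    <= B ^ (n - 1) ->
  B ^ (n - 1) <= a <= B ^ n ->
  let lambda := Rpower B (INR n / 8) in
  let f := fun x : R => 1 + 3 / 4 * mu * x + lambda * sigma * sqrt (3 / 4 * x) in
  exists n2 : Z,
    B ^ (n - 1) / mu <= IZR n2 <= 4 / (3 * mu) * B ^ n /\
    (4 | n2)%Z /\
    0 <= a - f (IZR n2) <= 3 * mu + 1.
Proof.
  intros Hh Hn; destruct n as [|m]; [lia|]; replace (S m - 1)%nat with m by lia.
  intros mu sigma B HB1 HB2 _ Ha lambda f.
  assert (HB : 2 <= B) by (apply (le_INR 2); destruct Hh; lia).
  assert (HmuB : 1 <= mu * B) by exact (digit_mean_mul_base_ge_1 b h Hh).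
  assert (Hmu : 0 < mu) by nra.
  assert (Hsig : 0 <= sigma) by apply sqrt_pos.
  assert (Hlam : 0 < lambda) by (unfold lambda, Rpower; apply exp_pos).
  assert (Hpow : forall (k : nat) (y : R), y = INR k * (INR (S m) / 8) ->
                  Rpower B y = lambda ^ k)
    by (intros k y ->; unfold lambda; apply Rpower_mult_INR; lra).
  assert (H8 : lambda ^ 8 = B * B ^ m).
  { change (B * B ^ m) with (B ^ S m); rewrite <- (Rpower_pow (S m) B) by lra.
    symmetry; apply Hpow; simpl; lra. }
  rewrite (Hpow 5%nat) in HB1 by (simpl; lra).
  rewrite (Hpow 3%nat) in HB2 by (simpl; lra).
  destruct (exists_mult4_between (B ^ m / mu)) as [z0 Hz0].
  pose proof (scaled_sd_sq_le mu sigma B lambda (B ^ m) Hmu Hsig ltac:(lra) Hlam H8 HB2)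
    as Hkey.
  pose proof (happy_bound_start mu sigma B lambda (B ^ m) (4 * IZR z0)
                HmuB HB Hsig Hlam H8 HB1 ltac:(nra) ltac:(lra)) as Hstart.
  destruct (happy_bound_crossing mu (lambda * sigma) Hmu ltac:(nra) a z0
              ltac:(lra) ltac:(lra)) as [z [Hz Hcross]].
  exists (4 * z)%Z.
  rewrite mult_IZR.
  change (f (4 * IZR z)) with (happy_bound mu (lambda * sigma) (4 * IZR z)).
  pose proof (happy_bound_ge mu (lambda * sigma) ltac:(nra) (4 * IZR z)).
  apply IZR_le in Hz.
  split; [split|split].
  - lra.
  - apply (Rmult_le_reg_l (3 * mu)); [lra|].
    replace (3 * mu * (4 / (3 * mu) * B ^ S m)) with (4 * B ^ S m) by (field; lra).
    lra.
  - exists z; ring.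
  - exact Hcross.
Qed.
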